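(* For every positive integer $k$, the $k\times k$ grid graph $R_k$ satisfies $\tau(R_k)=\nu(R_k)=k$.
   Context: $R_k$ is the planar grid graph with vertex set $\{1,\dots,k\}^2$ in which $(i,j)$ and $(i',j')$ are adjacent iff $|i-i'|+|j-j'|=1$. Thicket of $G=(V,E)$: a finite collection $\mathcal H$ of nonempty subsets of $V$ each inducing a connected subgraph and pairwise intersecting; $\tau(\mathcal H)$ is the minimum size of a set meeting every member, and the thicket number $\tau(G)$ is the maximum of $\tau(\mathcal H)$ over all thickets. Vine decomposition: a tree $T$ with labels $V_t\subseteq V$ such that for each vertex $v$ the set $T_v=\{t:v\in V_t\}$ is nonempty and connected in $T$, and for each edge $uv$, $T_u$ and $T_v$ share a node or contain nodes adjacent in $T$; width $\max_t|V_t|$; vinewidth $\nu(G)$ is the minimum width. *)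

From mathcomp Require Import all_boot.
Set Implicit Arguments. Unset Strict Implicit. Unset Printing Implicit Defensive.

Section Graphs.
Variable V : finType.

Definition induced (e : rel V) (A : {set V}) : rel V :=
  [rel x y | [&& x \in A, y \in A & e x y]].

Definition connected_in (e : rel V) (A : {set V}) : bool :=
  [forall x in A, forall y in A, connect (induced e A) x y].

Definition simple_graph (e : rel V) : Prop := symmetric e /\ irreflexive e.

Definition thicket (e : rel V) (H : {set {set V}}) : bool :=
  [forall A in H, (A != set0) && connected_in e A] &&
  [forall A in H, forall B in H, A :&: B != set0].

Definition hits (H : {set {set V}}) (X : {set V}) : bool :=
  [forall A in H, A :&: X != set0].

(* tau(H): minimum size of a set meeting every member of H
   (default #|V| if no such set exists, which never happens for thickets) *)
Definition tau_fam (H : {set {set V}}) : nat :=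
  \big[minn/#|V|]_(X : {set V} | hits H X) #|X|.

Definition thicket_number (e : rel V) : nat :=
  \max_(H : {set {set V}} | thicket e H) tau_fam H.

End Graphs.

Definition is_tree (T : finType) (eT : rel T) : Prop :=
  [/\ 0 < #|T|, simple_graph eT,
      (forall x y : T, connect eT x y) &
      (forall c : seq T, uniq c -> 2 < size c -> ~~ cycle eT c)].

Definition vine_decomposition (V : finType) (e : rel V)
    (T : finType) (eT : rel T) (lab : T -> {set V}) : Prop :=
  [/\ is_tree eT,
      (forall v : V, [set t | v \in lab t] != set0),
      (forall v : V, connected_in eT [set t | v \in lab t]) &
      (forall u v : V, e u v ->
         (exists t, (u \in lab t) && (v \in lab t)) \/
         (exists t t', [&& u \in lab t, v \in lab t' & eT t t']))].

Definition vine_width (V : finType) (T : finType) (lab : T -> {set V}) : nat :=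
  \max_(t : T) #|lab t|.

Definition vinewidth_is (V : finType) (e : rel V) (w : nat) : Prop :=
  (exists (T : finType) (eT : rel T) (lab : T -> {set V}),
      vine_decomposition e eT lab /\ vine_width lab = w) /\
  (forall (T : finType) (eT : rel T) (lab : T -> {set V}),
      vine_decomposition e eT lab -> w <= vine_width lab).

(* vertices (i,j) with 0 <= i,j < k (a relabelling of {1..k}^2) *)
Definition nat_dist (m n : nat) : nat := (m - n) + (n - m).

Definition grid (k : nat) : rel ('I_k * 'I_k)%type :=
  [rel x y : 'I_k * 'I_k | nat_dist x.1 y.1 + nat_dist x.2 y.2 == 1].
Arguments grid k : clear implicits.

From mathcomp Require Import all_boot zify.
Set Implicit Arguments. Unset Strict Implicit. Unset Printing Implicit Defensive.

(* Given a vine decomposition, the bags meeting a connected set A form a subtree, and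
   for the members of a thicket these subtrees pairwise intersect; by the Helly property
   of subtrees of a tree one bag meets every member, so tau(H) is at most the width.
   In R_k the k^2 crosses (row i together with column j) form a thicket with tau = k,
   since fewer than k vertices miss some row and some column.  Conversely, the windows
   of k consecutive vertices in row-major order, strung along a path, form a vine
   decomposition of width k, because a grid edge joins vertices whose row-major
   indices differ by 1 or by k. *)

Section InducedConnectivity.
Variables (T : finType) (e : rel T).
Implicit Types (A B S U : {set T}).

Lemma connected_inP A :
  reflect (forall x y, x \in A -> y \in A -> connect (induced e A) x y)
          (connected_in e A).
Proof.
apply: (iffP forallP) => [cA x y xA yA | cA x].
  by move/implyP: (cA x) => /(_ xA) /forallP /(_ y) /implyP; apply.
by apply/implyP => xA; apply/forallP => y; apply/implyP; apply: cA.
Qed.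

Lemma connect_induced_sub A B x y : A \subset B ->
  connect (induced e A) x y -> connect (induced e B) x y.
Proof.
move=> sAB; apply: connect_sub => u v /and3P[uA vA euv].
by apply: connect1; rewrite /induced /= !(subsetP sAB) ?euv.
Qed.

Lemma induced_subrel A : subrel (induced e A) e.
Proof. by move=> x y /and3P[]. Qed.

Hypothesis e_sym : symmetric e.

Lemma induced_sym A : symmetric (induced e A).
Proof. by move=> x y; rewrite /induced /= e_sym andbCA. Qed.

Lemma connect_induced_sym A x y :
  connect (induced e A) x y -> connect (induced e A) y x.
Proof. by rewrite (sym_connect_sym (induced_sym A)). Qed.

Lemma path_induced_setD1 S l x p : path (induced e S) x p ->
  x != l -> l \notin p -> path (induced e (S :\ l)) x p.
Proof.
elim: p x => //= a p IH x /andP[/and3P[xS aS exa] pP] xl.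
rewrite inE negb_or => /andP[la lp].
by rewrite /induced /= !in_setD1 xl xS eq_sym la aS exa IH // eq_sym.
Qed.

(* A shortest path between two other vertices of S cannot pass through l. *)
Lemma connected_in_setD1 S l :
    {in S &, forall y z, e l y -> e l z -> y = z} ->
  connected_in e S -> connected_in e (S :\ l).
Proof.
move=> uniq_nbr /connected_inP cS; apply/connected_inP => x y.
rewrite !in_setD1 => /andP[xl xS] /andP[yl yS].
case/connectP: (cS x y xS yS) => p pP y_last.
move: yl; rewrite y_last; case: (shortenP pP) => q qP uq _ yl.
apply/connectP; exists q => //; apply: path_induced_setD1 => //.
apply/negP => lq; move: qP uq yl; case/splitPr: lq => q1 q2.
rewrite cat_path last_cat /= => /andP[_].
case: q2 => [|z q3] /=; first by rewrite eqxx.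
move=> /and3P[/and3P[wS _ ewl] /and3P[_ zS elz] _].
move=> /andP[xq]; rewrite cat_uniq => /and3P[_ hq _] _.
have wz : last x q1 = z by apply: uniq_nbr => //; rewrite e_sym.
have := mem_last x q1; rewrite wz inE => /orP[/eqP zx | zq1].
  by move: xq; rewrite -zx mem_cat !inE eqxx !orbT.
by move/hasPn: hq => /(_ z); rewrite !inE eqxx orbT zq1 => /(_ isT).
Qed.

End InducedConnectivity.

Section SubtreeHelly.
Variables (T : finType) (e : rel T).
Hypotheses (e_sym : symmetric e) (e_irr : irreflexive e).
Hypothesis e_acyclic : forall c : seq T, uniq c -> 2 < size c -> ~~ cycle e c.
Implicit Types (F : {set {set T}}) (S U : {set T}).

Lemma tree_path_chordless x p1 y p2 : path e x (p1 ++ y :: p2) -> e x y ->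
  uniq (x :: p1 ++ y :: p2) -> p1 = [::].
Proof.
move=> pP exy up; case: p1 pP up => [//|b p1] pP up.
have uc : uniq (x :: rcons (b :: p1) y).
  move: up; rewrite -cats1 -cat_cons -(cat_cons x) => up.
  by apply: subseq_uniq up; apply: cat_subseq (subseq_refl _) _; rewrite sub1seq mem_head.
have cc : cycle e (x :: rcons (b :: p1) y).
  rewrite /= rcons_path last_rcons (e_sym y) exy andbT -cats1 cat_path /= andbT.
  by move: pP; rewrite /= cat_path /= => /and3P[-> -> /andP[-> _]].
by move: (e_acyclic uc); rewrite cc /= size_rcons => /(_ isT).
Qed.

Definition pendant_in U l p :=
  [/\ l \in U, p \in U, e l p & forall y, y \in U -> e l y -> y = p].

(* The last vertex of a maximal induced path without repeated vertices is pendant: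
   a second neighbour would be an earlier vertex of the path, closing a cycle. *)
Lemma connected_in_pendant U : 1 < #|U| -> connected_in e U ->
  exists l p, pendant_in U l p.
Proof.
move=> U2 /connected_inP cU.
have /set0Pn[u uU] : U != set0 by rewrite -card_gt0 ltnW.
suff: forall n x s, #|T| - size s <= n -> x \in U -> path (induced e U) x s ->
    uniq (x :: s) -> exists l p, pendant_in U l p.
  by move=> /(_ #|T| u [::]); apply => //; rewrite subn0.
elim=> [|n IH] x s hn xU pP us;
  have hs : size (x :: s) <= #|T| by rewrite -(card_uniqP us) max_card.
  by move: hn hs => /=; lia.
case: (boolP [exists y, [&& y \in U, e x y & y \notin x :: s]]).
  case/existsP => y /and3P[yU exy yn]; apply: (IH y (x :: s)) => /=.
  - by move: hn hs => /=; lia.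
  - exact: yU.
  - by rewrite /induced /= yU xU e_sym exy pP.
  - by move: us; rewrite /= yn.
move=> /existsPn no_new.
have nbr_in_s y : y \in U -> e x y -> y \in s.
  move=> yU exy; move: (no_new y); rewrite yU exy /= negbK inE.
  by case/orP=> [/eqP yx|//]; move: exy; rewrite yx e_irr.
have nbr_head y : y \in U -> e x y -> y = head x s.
  move=> yU exy; move: pP us; case/splitPr: (nbr_in_s y yU exy) => p1 p2 pP us.
  by rewrite (tree_path_chordless (sub_path (@induced_subrel _ e U) pP) exy us).
have [q qU xq] : exists2 q, q \in U & e x q.
  have : 0 < #|U :\ x| by move: U2; rewrite (cardsD1 x U) xU; lia.
  rewrite card_gt0 => /set0Pn[w]; rewrite in_setD1 => /andP[wx wU].
  case/connectP: (cU x w xU wU) => [[|y p] /=]; first by move=> _ /eqP; rewrite (negbTE wx).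
  by case/andP => /and3P[_ yU xy] _ _; exists y.
move: pP nbr_head (nbr_in_s q qU xq).
case: s {us hn hs no_new nbr_in_s} => [//|a s] /= /andP[/and3P[_ aU xa] _] nbr_head _.
by exists x, a; split.
Qed.

Lemma pendant_in_sub U S l p : pendant_in U l p -> S \subset U -> connected_in e S ->
  l \in S -> S :\ l != set0 -> p \in S.
Proof.
case=> _ _ _ only_p sSU /connected_inP cS lS /set0Pn[w].
rewrite in_setD1 => /andP[wl wS].
case/connectP: (cS l w lS wS) => [[|q r] /=]; first by move=> _ /eqP; rewrite (negbTE wl).
by case/andP => /and3P[_ qS lq] _ _; rewrite -(only_p q (subsetP sSU _ qS) lq).
Qed.

(* Delete a pendant vertex l of U from every member: unless [set l] is a member, this
   keeps them nonempty subtrees, and keeps them pairwise intersecting because a member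
   through l also contains the neighbour of l. *)
Lemma subtree_helly U F : U != set0 -> connected_in e U ->
    (forall S, S \in F -> [&& S != set0, S \subset U & connected_in e S]) ->
    {in F &, forall S R, S :&: R != set0} ->
  exists t, forall S, S \in F -> t \in S.
Proof.
have [n] := ubnP #|U|; elim: n U F => // n IH U F ltUn Un cU subF meetF.
case: (leqP #|U| 1) => U1.
  have /cards1P[u Uu] : #|U| == 1 by rewrite eqn_leq U1 card_gt0 Un.
  exists u => S SF; have /and3P[Sn SU _] := subF S SF.
  by move: SU; rewrite Uu subset1 (negbTE Sn) orbF => /eqP ->; apply: set11.
have [l [p lp]] := connected_in_pendant U1 cU; case: (lp) => lU pU elp only_p.
have pl : p != l by apply: contraTneq elp => ->; rewrite e_irr.
case: (boolP ([set l] \in F)) => lF.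
  exists l => S SF; case/set0Pn: (meetF _ _ lF SF) => z.
  by rewrite in_setI => /andP[/set1P ->].
have Sl_neq0 S : S \in F -> S :\ l != set0.
  move=> SF; rewrite setD_eq0 subset1 negb_or; have /and3P[-> _ _] := subF S SF.
  by rewrite andbT; apply: contraNneq lF => <-.
have nbr_l : {in U &, forall y z, e l y -> e l z -> y = z}.
  by move=> y z yU zU ly lz; rewrite (only_p y yU ly) (only_p z zU lz).
have [t Ht] : exists t, forall S', S' \in [set S :\ l | S in F] -> t \in S'.
  apply: (IH (U :\ l)).
  - by move: ltUn U1; rewrite (cardsD1 l U) lU; lia.
  - by apply/set0Pn; exists p; rewrite in_setD1 pl.
  - exact: connected_in_setD1.
  - move=> _ /imsetP[S SF ->]; have /and3P[_ SU cS] := subF S SF.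
    rewrite Sl_neq0 //= setSD //=; apply: connected_in_setD1 => // y z yS zS.
    by apply: nbr_l; apply: (subsetP SU).
  - move=> _ _ /imsetP[S SF ->] /imsetP[R RF ->].
    have /and3P[_ SU cS] := subF S SF; have /and3P[_ RU cR] := subF R RF.
    case/set0Pn: (meetF S R SF RF) => z; rewrite in_setI => /andP[zS zR].
    apply/set0Pn; have [zl | zl] := eqVneq z l.
      exists p; rewrite !in_setI !in_setD1 pl.
      by rewrite !(pendant_in_sub lp) ?Sl_neq0 -?zl.
    by exists z; rewrite !in_setI !in_setD1 zl zS zR.
exists t => S SF; have := Ht (S :\ l) (imset_f _ SF).
by rewrite in_setD1 => /andP[].
Qed.

End SubtreeHelly.

Lemma tau_fam_le_card (V : finType) (H : {set {set V}}) X : hits H X -> tau_fam H <= #|X|.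
Proof.
rewrite /tau_fam; have : X \in index_enum _ by rewrite mem_index_enum.
elim: (index_enum _) => [//|Y r IH]; rewrite big_cons inE => + hX.
case/orP => [/eqP <- | Xr]; first by rewrite hX geq_minl.
by case: (hits H Y); [apply: leq_trans (geq_minr _ _) (IH Xr hX) | apply: IH].
Qed.

Section VineDecomposition.
Variables (V : finType) (e : rel V) (T : finType) (eT : rel T) (lab : T -> {set V}).
Hypothesis dec : vine_decomposition e eT lab.
Implicit Types (A B : {set V}) (H : {set {set V}}).

Definition bags_meeting A : {set T} := [set t | lab t :&: A != set0].

Lemma bags_meeting_meet A B : A :&: B != set0 ->
  bags_meeting A :&: bags_meeting B != set0.
Proof.
case/set0Pn=> v; rewrite in_setI => /andP[vA vB].
case: dec => _ /(_ v) /set0Pn[t]; rewrite inE => vt _ _.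
by apply/set0Pn; exists t; rewrite !inE; apply/andP; split; apply/set0Pn; exists v;
  rewrite in_setI vt.
Qed.

Lemma connect_bags_meeting A v t t' : v \in A -> v \in lab t -> v \in lab t' ->
  connect (induced eT (bags_meeting A)) t t'.
Proof.
move=> vA vt vt'; case: dec => _ _ /(_ v) /connected_inP c_v _.
apply: connect_induced_sub (c_v t t' _ _); rewrite ?inE //.
by apply/subsetP => s; rewrite !inE => vs; apply/set0Pn; exists v; rewrite in_setI vs.
Qed.

Lemma connected_bags_meeting A : connected_in e A -> connected_in eT (bags_meeting A).
Proof.
have [_ bag_of _ edge_bags] := dec.
have meets v t : v \in A -> v \in lab t -> t \in bags_meeting A.
  by move=> vA vt; rewrite inE; apply/set0Pn; exists v; rewrite in_setI vt.
move=> /connected_inP cA; apply/connected_inP => t1 t2.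
rewrite !inE => /set0Pn[v1]; rewrite in_setI => /andP[v1t v1A].
case/set0Pn=> v2; rewrite in_setI => /andP[v2t v2A].
case/connectP: (cA v1 v2 v1A v2A) => p pP v2_last; rewrite {v2}v2_last in v2t v2A.
elim: p v1 t1 v1A v1t pP v2t {v2A} => [|w p IH] v1 t1 v1A v1t /=.
  by move=> _; apply: connect_bags_meeting v1A v1t.
case/andP => /and3P[_ wA ev1w] pP v2t.
have /set0Pn[tw] := bag_of w; rewrite inE => wtw.
apply: connect_trans (IH w tw wA wtw pP v2t).
case: (edge_bags v1 w ev1w) => [[s /andP[v1s ws]] | [s [s' /and3P[v1s ws' ess']]]].
  exact: connect_trans (connect_bags_meeting v1A v1t v1s) (connect_bags_meeting wA ws wtw).
apply: connect_trans (connect_bags_meeting v1A v1t v1s) _.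
apply: connect_trans _ (connect_bags_meeting wA ws' wtw).
by apply: connect1; rewrite /induced /= ess' (meets v1) ?(meets w).
Qed.

Lemma tau_fam_le_vine_width H : thicket e H -> tau_fam H <= vine_width lab.
Proof.
case/andP=> /forallP memH /forallP meetH.
have [[T_gt0 [eT_sym eT_irr] eT_conn eT_acyclic] _ _ _] := dec.
have [t Ht] : exists t, forall S, S \in [set bags_meeting A | A in H] -> t \in S.
  apply: (@subtree_helly T eT eT_sym eT_irr eT_acyclic setT).
  - by rewrite -card_gt0 cardsT.
  - apply/connected_inP => x y _ _.
    by rewrite (@eq_connect _ _ eT) // => u v; rewrite /induced /= !in_setT.
  - move=> _ /imsetP[A AH ->]; have /andP[A0 cA] := implyP (memH A) AH.
    rewrite subsetT connected_bags_meeting // !andbT.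
    by move: A0; rewrite -{1}(setIid A) => /bags_meeting_meet; rewrite setIid.
  - move=> _ _ /imsetP[A AH ->] /imsetP[B BH ->].
    by apply: bags_meeting_meet; move/implyP: (meetH A) => /(_ AH) /forallP /(_ B) /implyP; apply.
have hit : hits H (lab t).
  apply/forallP => A; apply/implyP => AH.
  by have := Ht _ (imset_f _ AH); rewrite inE setIC.
exact: leq_trans (tau_fam_le_card hit) (leq_bigmax t).
Qed.

End VineDecomposition.

Lemma thicket_number_vinewidth (V : finType) (e : rel V) (k : nat) (H : {set {set V}})
    (T : finType) (eT : rel T) (lab : T -> {set V}) :
    thicket e H -> k <= tau_fam H ->
    vine_decomposition e eT lab -> vine_width lab <= k ->
  thicket_number e = k /\ vinewidth_is e k.
Proof.
move=> tH k_le_tau dec width_le_k.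
have k_le_width (T' : finType) (eT' : rel T') (lab' : T' -> {set V}) :
    vine_decomposition e eT' lab' -> k <= vine_width lab'.
  by move=> dec'; apply: leq_trans k_le_tau (tau_fam_le_vine_width dec' tH).
have width_k : vine_width lab = k by apply/eqP; rewrite eqn_leq width_le_k (k_le_width _ _ _ dec).
split; last by split; [exists T, eT, lab | apply: k_le_width].
apply/eqP; rewrite eqn_leq /thicket_number (leq_trans k_le_tau (leq_bigmax_cond _ tH)) andbT.
by apply/bigmax_leqP => H' tH'; rewrite -width_k; exact: (tau_fam_le_vine_width dec tH').
Qed.

Section PathGraph.
Variable N : nat.
Implicit Types (a b : 'I_N) (S : {set 'I_N}).

Definition path_graph : rel 'I_N :=
  [rel a b : 'I_N | (a.+1 == b :> nat) || (b.+1 == a :> nat)].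

Lemma path_graph_sym : symmetric path_graph.
Proof. by move=> a b; rewrite /path_graph /= orbC. Qed.

Lemma path_graph_irr : irreflexive path_graph.
Proof. by move=> a; rewrite /path_graph /= orbb; apply/eqP; lia. Qed.

(* Both cycle-neighbours of the largest vertex of a cycle must be its predecessor. *)
Lemma path_graph_acyclic c : uniq c -> 2 < size c -> ~~ cycle path_graph c.
Proof.
case: c => [//|x0 c0] uc sc; apply/negP => cc.
have [m mc max_m] : exists2 m, m \in x0 :: c0 & forall y, y \in x0 :: c0 -> y <= m.
  by case: (arg_maxnP val (mem_head x0 c0)) => m; exists m.
case: (rot_to mc) => i s rot_m.
move: uc cc sc; rewrite -(rot_uniq i) -(rot_cycle i) -(size_rot i) rot_m.
have {}max_m y : y \in m :: s -> y <= m by rewrite -rot_m mem_rot; apply: max_m.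
case: s rot_m max_m => [|a [|b s]] // _ max_m /= /and3P[_ an _].
case/andP=> ema; rewrite rcons_path => /andP[_ /andP[_ elm]] _.
have la : last b s \in a :: b :: s by rewrite inE mem_last orbT.
have am : a <= m by apply: max_m; rewrite !inE eqxx orbT.
have lm : last b s <= m by apply: max_m; rewrite inE la orbT.
have a_last : a = last b s :> nat.
  by move: ema elm am lm; rewrite /path_graph /= => /orP[/eqnP|/eqnP] ? /orP[/eqnP|/eqnP] ? *; lia.
by move: an; rewrite (ord_inj a_last) mem_last.
Qed.

Lemma path_graph_interval_connected S :
    (forall a b c, a \in S -> c \in S -> a <= b <= c -> b \in S) ->
  connected_in path_graph S.
Proof.
move=> convex; apply/connected_inP.
suff up a b : a \in S -> b \in S -> a <= b -> connect (induced path_graph S) a b.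
  move=> a b aS bS; case: (leqP a b) => ab; first exact: up.
  by apply: connect_induced_sym path_graph_sym _ _ _ (up _ _ bS aS (ltnW ab)).
move=> aS bS ab; move Ed: (b - a) => d.
elim: d b bS ab Ed => [|d IH] b bS ab Ed.
  by have -> : b = a by apply: ord_inj; lia.
have b'_lt : b.-1 < N by apply: leq_ltn_trans (leq_pred b) (ltn_ord b).
pose b' := Ordinal b'_lt.
have b'S : b' \in S by apply: convex aS bS _; rewrite /= leq_pred andbT; lia.
apply: connect_trans (IH b' b'S _ _) (connect1 _); rewrite /induced /path_graph /= ?b'S ?bS; lia.
Qed.

Lemma path_graph_connect a b : connect path_graph a b.
Proof.
have /connected_inP conn : connected_in path_graph setT.
  by apply: path_graph_interval_connected => ? c *; rewrite in_setT.
move: (conn a b (in_setT a) (in_setT b)).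
by apply: connect_sub => u v /induced_subrel /connect1.
Qed.

Lemma path_graph_tree : 0 < N -> is_tree path_graph.
Proof.
move=> N_gt0; split.
- by rewrite card_ord.
- by split; [apply: path_graph_sym | apply: path_graph_irr].
- exact: path_graph_connect.
- exact: path_graph_acyclic.
Qed.

End PathGraph.

Arguments path_graph : clear implicits.

Lemma connect_induced_path_graph_image (T : finType) (e : rel T) (A : {set T}) N
    (g : 'I_N -> T) :
    {homo g : a b / path_graph N a b >-> e a b} -> (forall a, g a \in A) ->
  forall a b, connect (induced e A) (g a) (g b).
Proof.
move=> g_homo gA a b; case/connectP: (path_graph_connect a b) => p pP ->.
apply/connectP; exists (map g p); last by rewrite last_map.
by apply: homo_path pP => u v uv; rewrite /induced /= !gA g_homo.
Qed.

Lemma exists_notin_imset (aT rT : finType) (f : aT -> rT) (X : {set aT}) :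
  #|X| < #|rT| -> exists y, y \notin f @: X.
Proof.
move=> small; have : 0 < #|~: (f @: X)|.
  by rewrite cardsCs setCK subn_gt0 (leq_ltn_trans (leq_imset_card f X)).
by case/card_gt0P => y; rewrite inE; exists y.
Qed.

Lemma leq_tau_fam (V : finType) (H : {set {set V}}) m :
  m <= #|V| -> (forall X, hits H X -> m <= #|X|) -> m <= tau_fam H.
Proof.
move=> m_le_V m_le_hits; apply: (big_ind (fun n => m <= n)) => //.
by move=> a b ma mb; rewrite leq_min ma mb.
Qed.

Section Grid.
Variable k : nat.
Local Notation V := ('I_k * 'I_k)%type.
Implicit Types (x u v : V) (X : {set V}).

Lemma grid_sym : symmetric (grid k).
Proof. by move=> x y; rewrite /grid /nat_dist /=; apply/eqP/eqP; lia. Qed.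

Definition cross (i j : 'I_k) : {set V} := [set x | (x.1 == i) || (x.2 == j)].

Definition crosses : {set {set V}} := [set cross x.1 x.2 | x in [set: V]].

Lemma connected_cross i j : connected_in (grid k) (cross i j).
Proof.
have row (a b : 'I_k) : connect (induced (grid k) (cross i j)) (i, a) (i, b).
  apply: (connect_induced_path_graph_image (g := fun a => (i, a))).
    by move=> c d; rewrite /path_graph /grid /nat_dist /=; lia.
  by move=> c; rewrite inE eqxx.
have col (a b : 'I_k) : connect (induced (grid k) (cross i j)) (a, j) (b, j).
  apply: (connect_induced_path_graph_image (g := fun a => (a, j))).
    by move=> c d; rewrite /path_graph /grid /nat_dist /=; lia.
  by move=> c; rewrite inE eqxx orbT.
have to_centre x : x \in cross i j -> connect (induced (grid k) (cross i j)) x (i, j).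
  by case: x => a b; rewrite inE /= => /orP[/eqP -> | /eqP ->]; [apply: row | apply: col].
apply/connected_inP => x y /to_centre cx /to_centre cy.
exact: connect_trans cx (connect_induced_sym grid_sym cy).
Qed.

Lemma crosses_thicket : thicket (grid k) crosses.
Proof.
apply/andP; split; apply/forallP => A; apply/implyP => /imsetP[[i j] _ ->] /=.
  by rewrite connected_cross andbT; apply/set0Pn; exists (i, j); rewrite inE eqxx.
apply/forallP => B; apply/implyP => /imsetP[[i' j'] _ ->] /=.
by apply/set0Pn; exists (i, j'); rewrite in_setI !inE /= !eqxx orbT.
Qed.

Lemma crosses_hits_card X : hits crosses X -> k <= #|X|.
Proof.
rewrite leqNgt; apply: contraTN => small.
have {}small : #|X| < #|'I_k| by rewrite card_ord.
have [i ni] := exists_notin_imset fst small; have [j nj] := exists_notin_imset snd small.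
have cross_ij : cross i j \in crosses by apply/imsetP; exists (i, j).
apply/forallPn; exists (cross i j); rewrite cross_ij negbK.
apply/eqP/setP => -[a b]; rewrite !inE /=; apply/negP => /andP[/orP[/eqP ai | /eqP bj] abX].
- by move: ni; rewrite -ai (imset_f fst abX).
- by move: nj; rewrite -bj (imset_f snd abX).
Qed.

Lemma leq_tau_crosses : k <= tau_fam crosses.
Proof.
apply: leq_tau_fam; last exact: crosses_hits_card.
by rewrite card_prod card_ord; nia.
Qed.

Definition row_major x : nat := x.1 * k + x.2.

Lemma row_major_lt x : row_major x < k * k.
Proof. by case: x => a b; rewrite /row_major /=; move: (ltn_ord a) (ltn_ord b); nia. Qed.

Lemma row_major_inj : injective row_major.
Proof.
move=> [a b] [c d]; rewrite /row_major /= => eq_ac.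
have k_gt0 : 0 < k by apply: leq_ltn_trans (ltn_ord a).
have := congr1 (divn^~ k) eq_ac; have := congr1 (modn^~ k) eq_ac.
rewrite !modnMDl !modn_small // !divnMDl // !divn_small // !addn0.
by move=> /val_inj -> /val_inj ->.
Qed.

Lemma row_major_edge u v : grid k u v -> row_major u < row_major v ->
  row_major v <= row_major u + k.
Proof.
case: u v => [a b] [c d]; rewrite /grid /nat_dist /row_major /= => /eqP.
have := ltn_ord b; have := ltn_ord d.
case: (ltngtP a c) => [ac | ca | ->] dk bk edge lt; last by lia.
- have -> : (c : nat) = a.+1 by lia.
  by rewrite mulSn; lia.
- have -> : (a : nat) = c.+1 by lia.
  by move: lt; rewrite mulSn; lia.
Qed.

Definition window (t : 'I_(k * k)) : {set V} := [set x | t <= row_major x < t + k].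

Lemma card_window t : #|window t| <= k.
Proof.
rewrite cardE -(size_map row_major) -[X in _ <= X](size_iota t).
apply: uniq_leq_size; first by rewrite (map_inj_uniq row_major_inj) enum_uniq.
by move=> n /mapP[x]; rewrite mem_enum inE mem_iota => + ->.
Qed.

Lemma window_vine_width : vine_width window <= k.
Proof. by apply/bigmax_leqP => t _; apply: card_window. Qed.

Definition row_major_ord x : 'I_(k * k) := Ordinal (row_major_lt x).

Lemma mem_window_row_major_ord x : x \in window (row_major_ord x).
Proof. by rewrite inE /=; move: (ltn_ord x.1); lia. Qed.

Hypothesis k_gt0 : 0 < k.

Lemma window_vine_decomposition :
  vine_decomposition (grid k) (path_graph (k * k)) window.
Proof.
split.
- by apply: path_graph_tree; rewrite muln_gt0 k_gt0.
- by move=> x; apply/set0Pn; exists (row_major_ord x); rewrite inE mem_window_row_major_ord.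
- by move=> x; apply: path_graph_interval_connected => a b c; rewrite !inE; lia.
move=> u v; wlog lt_uv : u v / row_major u < row_major v => [hwlog uv | uv].
  case: (ltngtP (row_major u) (row_major v)) => [lt | gt | eq].
  - exact: hwlog.
  - case: (hwlog v u gt); first by rewrite grid_sym.
      by case=> t /andP[vt ut]; left; exists t; rewrite ut vt.
    by case=> t [t' /and3P[vt ut' tt']]; right; exists t', t; rewrite ut' vt path_graph_sym.
  - by move: uv; rewrite (row_major_inj eq) /grid /nat_dist /= !subnn.
right; have next_lt : (row_major u).+1 < k * k := leq_ltn_trans lt_uv (row_major_lt v).
exists (row_major_ord u), (Ordinal next_lt).
rewrite mem_window_row_major_ord inE /path_graph /= eqxx andbT.
by have := row_major_edge uv lt_uv; lia.
Qed.

End Grid.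

Theorem mainTheorem10 (k : nat) (hk : 0 < k) :
  thicket_number (grid k) = k /\ vinewidth_is (grid k) k.
Proof.
exact: thicket_number_vinewidth (crosses_thicket k) (leq_tau_crosses k)
  (window_vine_decomposition hk) (window_vine_width k).
Qed.
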